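(* Let $X,Y$ be Hilbert spaces, $U:=X\times Y$, $K\in\mathcal{L}(X;Y)$, and let $\partial G:X\rightrightarrows X$ and $\partial F^*:Y\rightrightarrows Y$ be set-valued maps. Define $H:U\rightrightarrows U$ by $H(x,y):=\big(\partial G(x)+K^*y\big)\times\big(\partial F^*(y)-Kx\big)$. Fix $i\in\mathbb{N}$, $\tau_i,\sigma_{i+1},\phi_i,\psi_{i+1}>0$, $\gamma,\rho\ge0$, and set \[ W_{i+1}:=\begin{pmatrix}\tau_iI&0\\0&\sigma_{i+1}I\end{pmatrix},\quad Z_{i+1}:=\begin{pmatrix}\phi_iI&0\\0&\psi_{i+1}I\end{pmatrix},\quad \Xi_{i+1}:=\begin{pmatrix}\gamma\tau_iI&2\tau_iK^*\\-2\sigma_{i+1}K&\rho\sigma_{i+1}I\end{pmatrix}. \] Let $Z_{i+2},M_{i+2}\in\mathcal{L}(U;U)$ with $Z_{i+2}M_{i+2}$ self-adjoint and positive semidefinite. Let $\hat u\in H^{-1}(0)$ and suppose there is a neighbourhood $\mathcal{U}$ of $\hat u$ such that for all $u=(x,y)\in\mathcal{U}$, $q\in\partial G(x)$, $z\in\partial F^*(y)$, \[ \inf_{(x^*,y^* )\in H^{-1}(0)}\Big[\langle q+K^*y^*,x-x^*\rangle-\tfrac{\gamma}{2}\|x-x^*\|^2\Big]\ge0,\qquad \inf_{(x^*,y^* )\in H^{-1}(0)}\Big[\langle z-Kx^*,y-y^*\rangle-\tfrac{\rho}{2}\|y-y^*\|^2\Big]\ge0. \] Then $H$ is $(Z_{i+1}\Xi_{i+1},2Z_{i+1}W_{i+1},Z_{i+2}M_{i+2})$-partially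 strongly submonotone at $(\hat u,0)$.
   Context: For $T\in\mathcal{L}(U;U)$: $\langle x,z\rangle_T:=\langle Tx,z\rangle$, $\|x\|^2_T:=\langle Tx,x\rangle$, $\operatorname{dist}^2_T(z,A):=\inf_{u\in A}\|z-u\|^2_T$. For $\Xi,N,M\in\mathcal{L}(U;U)$ with $M\ge0$, a map $T:U\rightrightarrows U$ is $(\Xi,N,M)$-partially strongly submonotone at $(\hat u,\hat w)\in\operatorname{graph}T$ if there is a neighbourhood $\mathcal{U}\ni\hat u$ such that $\inf_{u^*\in T^{-1}(\hat w)}(\langle w-\hat w,u-u^*\rangle_N+\|u-u^*\|^2_{M-\Xi})\ge\operatorname{dist}^2_M(u,T^{-1}(\hat w))$ for all $u\in\mathcal{U}$, $w\in T(u)$. Note that for $(x^*,y^* )\in H^{-1}(0)$ one has $-K^*y^*\in\partial G(x^* )$ and $Kx^*\in\partial F^*(y^* )$. *)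

From mathcomp Require Import all_boot all_algebra all_classical all_reals ereal.
Set Implicit Arguments. Unset Strict Implicit. Unset Printing Implicit Defensive.
Import GRing.Theory Num.Theory.
Local Open Scope ring_scope.
Local Open Scope classical_set_scope.

Definition inner_product (R : realType) (V : lmodType R) (ip : V -> V -> R) :
  Prop :=
  [/\ (forall x y, ip x y = ip y x),
      (forall (a : R) x y z, ip (a *: x + y) z = a * ip x z + ip y z),
      (forall x, 0 <= ip x x) &
      (forall x, ip x x = 0 -> x = 0)].

Definition ipnorm (R : realType) (V : lmodType R) (ip : V -> V -> R) (x : V) :
  R := Num.sqrt (ip x x).

Definition ip_complete (R : realType) (V : lmodType R) (ip : V -> V -> R) :
  Prop :=
  forall u : nat -> V,
    (forall e : R, 0 < e -> exists N : nat, forall m n : nat,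
        (N <= m)%N -> (N <= n)%N -> ipnorm ip (u m - u n) < e) ->
    exists l : V, forall e : R, 0 < e -> exists N : nat, forall n : nat,
        (N <= n)%N -> ipnorm ip (u n - l) < e.

Definition hilbert (R : realType) (V : lmodType R) (ip : V -> V -> R) : Prop :=
  inner_product ip /\ ip_complete ip.

Definition bounded_linear (R : realType) (A B : lmodType R)
  (ipA : A -> A -> R) (ipB : B -> B -> R) (f : A -> B) : Prop :=
  (forall (a : R) x y, f (a *: x + y) = a *: f x + f y) /\
  exists C : R, forall x, ipnorm ipB (f x) <= C * ipnorm ipA x.

Definition is_adjoint (R : realType) (A B : lmodType R)
  (ipA : A -> A -> R) (ipB : B -> B -> R) (K : A -> B) (Kadj : B -> A) : Prop :=
  forall x y, ipB (K x) y = ipA x (Kadj y).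

Definition prod_ip (R : realType) (X Y : lmodType R)
  (ipX : X -> X -> R) (ipY : Y -> Y -> R) (u v : X * Y) : R :=
  ipX u.1 v.1 + ipY u.2 v.2.

(* set-valued maps T : V ⇉ V are represented by their graphs: T u w <-> w ∈ T(u).
   <x,z>_T := <Tx,z>,  ||x||^2_T := <Tx,x>,
   dist^2_T(z,A) := inf_{u in A} ||z-u||^2_T  (an infimum in \bar R). *)
Definition partially_strongly_submonotone (R : realType) (V : lmodType R)
  (ip : V -> V -> R) (T : V -> V -> Prop) (Xi N M : V -> V) (uh wh : V) : Prop :=
  T uh wh /\
  exists d : R, 0 < d /\
    forall u w : V, ipnorm ip (u - uh) < d -> T u w ->
      (ereal_inf [set (ip (M (u - us)) (u - us))%:E | us in [set us | T us wh]]
       <= ereal_inf [set (ip (N (w - wh)) (u - us)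
                          + ip (M (u - us) - Xi (u - us)) (u - us))%:E
                    | us in [set us | T us wh]])%E.

Definition Hop (R : realType) (X Y : lmodType R)
  (dG : X -> X -> Prop) (dFs : Y -> Y -> Prop) (K : X -> Y) (Kadj : Y -> X)
  (u w : X * Y) : Prop :=
  (exists q, dG u.1 q /\ w.1 = q + Kadj u.2) /\
  (exists z, dFs u.2 z /\ w.2 = z - K u.1).

(* Z_{i+1} Ξ_{i+1},  with Ξ(x,y) = (γτ x + 2τ K^* y, −2σ K x + ρσ y),
   Z(a,b) = (φ a, ψ b) *)
Definition ZXi (R : realType) (X Y : lmodType R) (K : X -> Y) (Kadj : Y -> X)
  (tau sigma phi psi gamma rho : R) (u : X * Y) : X * Y :=
  (phi *: ((gamma * tau) *: u.1 + (2 * tau) *: Kadj u.2),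
   psi *: (- ((2 * sigma) *: K u.1) + (rho * sigma) *: u.2)).

Definition twoZW (R : realType) (X Y : lmodType R)
  (tau sigma phi psi : R) (u : X * Y) : X * Y :=
  (2 *: (phi *: (tau *: u.1)), 2 *: (psi *: (sigma *: u.2))).

(* Let us = (xs, ys) be a zero of H, w = (q + K^* y, z - K x) a point of
   H(u), and du = u - us = (dx, dy).  Splitting K^* y = K^* ys + K^* dy and
   K x = K xs + K dx, the skew blocks 2 tau K^* and -2 sigma K of Xi cancel
   exactly against the corrections K^* dy and K dx, so that
   <2 Z W w, du> - <Z Xi du, du> is 2 phi tau and 2 psi sigma times the two
   quantities the local hypothesis keeps nonnegative. *)

From mathcomp Require Import all_boot all_algebra all_classical all_reals ereal.
From mathcomp Require Import ring lra.
Import order.Order.TTheory GRing.Theory Num.Theory.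
Local Open Scope ring_scope.
Local Open Scope classical_set_scope.

Section InnerProduct.
Context {R : realType} {V : lmodType R} {ip : V -> V -> R}.
Hypothesis ip_inner : inner_product ip.

Lemma ipC x y : ip x y = ip y x.
Proof. by case: ip_inner. Qed.

Lemma ipDl x y z : ip (x + y) z = ip x z + ip y z.
Proof. by case: ip_inner => _ linl _ _; rewrite -{1}[x]scale1r linl mul1r. Qed.

Lemma ip0l z : ip 0 z = 0.
Proof. by apply: (addrI (ip 0 z)); rewrite -ipDl !addr0. Qed.

Lemma ipZl a x z : ip (a *: x) z = a * ip x z.
Proof. by case: ip_inner => _ linl _ _; rewrite -[a *: x]addr0 linl ip0l addr0. Qed.

Lemma ipNl x z : ip (- x) z = - ip x z.
Proof. by rewrite -scaleN1r ipZl mulN1r. Qed.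

Lemma ipBl x y z : ip (x - y) z = ip x z - ip y z.
Proof. by rewrite ipDl ipNl. Qed.

Lemma ipBr x y z : ip z (x - y) = ip z x - ip z y.
Proof. by rewrite ipC ipBl !(ipC z). Qed.

Lemma ipnorm_sqr x : ipnorm ip x ^+ 2 = ip x x.
Proof. by case: ip_inner => _ _ ge0 _; rewrite sqr_sqrtr. Qed.

End InnerProduct.

Lemma prod_ip_inner_product (R : realType) (X Y : lmodType R)
    (ipX : X -> X -> R) (ipY : Y -> Y -> R) :
  inner_product ipX -> inner_product ipY -> inner_product (prod_ip ipX ipY).
Proof.
move=> hX hY; rewrite /prod_ip; split => [u v | a u v w | u | [x y] /= xy0].
- by rewrite (ipC hX) (ipC hY).
- by case: hX => _ linX _ _; case: hY => _ linY _ _; rewrite /= linX linY; ring.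
- by case: hX => _ _ geX _; case: hY => _ _ geY _; rewrite addr_ge0.
case: hX => _ _ geX defX; case: hY => _ _ geY defY.
have /andP[/eqP x0 /eqP y0] : (ipX x x == 0) && (ipY y y == 0).
  by rewrite -paddr_eq0 ?xy0.
by rewrite (defX _ x0) (defY _ y0).
Qed.

Lemma partially_strongly_submonotone_of_local (R : realType) (V : lmodType R)
    (ip : V -> V -> R) (T : V -> V -> Prop) (Xi N M : V -> V) (uh wh : V) :
  inner_product ip -> T uh wh ->
  (exists2 d : R, 0 < d & forall u w us, ipnorm ip (u - uh) < d ->
     T u w -> T us wh -> ip (Xi (u - us)) (u - us) <= ip (N (w - wh)) (u - us)) ->
  partially_strongly_submonotone ip T Xi N M uh wh.
Proof.
move=> hip Tuh [d d_gt0 local]; split => //; exists d; split => // u w near_u Tuw.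
apply/ereal_infP => _ [us Tus <-].
apply: le_trans (ereal_inf_lbound (ex_intro2 _ _ us Tus erefl)) _.
rewrite lee_fin (ipBl hip).
by have := local u w us near_u Tuw Tus; lra.
Qed.

Section SaddlePoint.
Context {R : realType} {X Y : lmodType R} {ipX : X -> X -> R} {ipY : Y -> Y -> R}.
Hypotheses (hX : inner_product ipX) (hY : inner_product ipY).
Context {K : X -> Y} {Kadj : Y -> X}.
Hypothesis hKadj : is_adjoint ipX ipY K Kadj.
Context {tau sigma phi psi gamma rho : R}.

Lemma ip_adjoint_l v x : ipX (Kadj v) x = ipY (K x) v.
Proof. by rewrite (ipC hX) hKadj. Qed.

Lemma twoZW_sub_ZXi x y q z xs ys :
  prod_ip ipX ipY (twoZW tau sigma phi psi (q + Kadj y, z - K x)) (x - xs, y - ys)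
  - prod_ip ipX ipY (ZXi K Kadj tau sigma phi psi gamma rho (x - xs, y - ys))
      (x - xs, y - ys)
  = 2 * phi * tau * (ipX (q + Kadj ys) (x - xs) - gamma / 2 * ipnorm ipX (x - xs) ^+ 2)
  + 2 * psi * sigma * (ipY (z - K xs) (y - ys) - rho / 2 * ipnorm ipY (y - ys) ^+ 2).
Proof.
rewrite /prod_ip /twoZW /ZXi /= (ipnorm_sqr hX) (ipnorm_sqr hY).
rewrite ?(ipDl hX, ipZl hX, ipNl hX, ipBl hX, ipDl hY, ipZl hY, ipNl hY, ipBl hY).
rewrite ?ip_adjoint_l ?(ipBr hY) ?hKadj ?(ipBl hX).
by field.
Qed.

End SaddlePoint.

Theorem proposition6p1 (R : realType) (X Y : lmodType R)
  (ipX : X -> X -> R) (ipY : Y -> Y -> R)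
  (hX : hilbert ipX) (hY : hilbert ipY)
  (K : X -> Y) (Kadj : Y -> X)
  (hK : bounded_linear ipX ipY K) (hKadj : is_adjoint ipX ipY K Kadj)
  (dG : X -> X -> Prop) (dFs : Y -> Y -> Prop)
  (tau sigma phi psi gamma rho : R)
  (htau : 0 < tau) (hsigma : 0 < sigma) (hphi : 0 < phi) (hpsi : 0 < psi)
  (hgamma : 0 <= gamma) (hrho : 0 <= rho)
  (Z2 M2 : X * Y -> X * Y)
  (hZ2 : bounded_linear (prod_ip ipX ipY) (prod_ip ipX ipY) Z2)
  (hM2 : bounded_linear (prod_ip ipX ipY) (prod_ip ipX ipY) M2)
  (hZM_sa : forall u v, prod_ip ipX ipY (Z2 (M2 u)) v
                        = prod_ip ipX ipY u (Z2 (M2 v)))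
  (hZM_psd : forall u, 0 <= prod_ip ipX ipY (Z2 (M2 u)) u)
  (uh : X * Y) (huh : Hop dG dFs K Kadj uh 0)
  (hloc : exists d : R, 0 < d /\
     forall (x : X) (y : Y) (q : X) (z : Y),
       ipnorm (prod_ip ipX ipY) ((x, y) - uh) < d -> dG x q -> dFs y z ->
       (0%:E <= ereal_inf
          [set (ipX (q + Kadj us.2) (x - us.1)
                - gamma / 2 * ipnorm ipX (x - us.1) ^+ 2)%:E
          | us in [set us | Hop dG dFs K Kadj us (0 : X * Y)%R]])%E /\
       (0%:E <= ereal_inf
          [set (ipY (z - K us.1) (y - us.2)
                - rho / 2 * ipnorm ipY (y - us.2) ^+ 2)%:E
          | us in [set us | Hop dG dFs K Kadj us (0 : X * Y)%R]])%E) :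
  partially_strongly_submonotone (prod_ip ipX ipY) (Hop dG dFs K Kadj)
    (ZXi K Kadj tau sigma phi psi gamma rho) (twoZW tau sigma phi psi)
    (fun u => Z2 (M2 u)) uh 0.
Proof.
have [[hXi _] [hYi _]] := (hX, hY).
eapply partially_strongly_submonotone_of_local; [exact: prod_ip_inner_product | exact: huh |].
case: hloc => d [d_gt0 local]; exists d => // -[x y] [wx wy] us near_u.
move=> [[q [Gq /= ->]] [z [Fz /= ->]]] Hus.
have [/ereal_infP Gmon /ereal_infP Fmon] := local x y q z near_u Gq Fz.
have := Gmon _ (ex_intro2 _ _ us Hus erefl); have := Fmon _ (ex_intro2 _ _ us Hus erefl).
case: us {Hus} => xs ys /=; rewrite !lee_fin => Fpos Gpos.
rewrite subr0 -subr_ge0 (twoZW_sub_ZXi hXi hYi hKadj).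
by rewrite addr_ge0 // mulr_ge0 // !mulr_ge0 // ltW.
Qed.
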